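(* Let $R$ be a field, $S$ an idempotent semifield, and $v:R\to S$ a B\'ezout valuation with $v^\circ:R^\circ\to S^\circ$ surjective, and consider the correspondence between ideals $I\subseteq R^\circ$ and $k$-ideals $J\subseteq S^\circ$ given by $J=v(I)$, $I=v^{-1}(J)$. This correspondence preserves radical ideals and primary ideals.
   Context: An idempotent semiring is a commutative semiring with $a+a=a$, ordered by $a\le b$ iff $a+b=b$; a semifield has all nonzero elements invertible. A seminorm $v:R\to S$ satisfies $v(0)=0$, $v(1)=v(-1)=1$, $v(ab)\le v(a)v(b)$, $v(a+b)\le v(a)+v(b)$; a valuation is a multiplicative seminorm with $v(a)\ne0$ for $a\ne0$. $R^\circ=\{a:v(a)\le1\}$, $S^\circ=\{x\le1\}$, $v^\circ=v|_{R^\circ}$. $v$ is B\'ezout if for all $a,b\in R$ there are $x,y\in R^\circ$ with $v(xa+yb)=v(a)+v(b)$. Semiring ideals contain $0$ and are closed under addition and multiplication by semiring elements; a $k$-ideal $I$ satisfies: $a+b\in I$, $a\in I\Rightarrow b\in I$; prime: complement multiplicatively closed; radical: $x^n\in I\Rightarrow x\in I$; primary: $xy\in I$, $x\notin I\Rightarrow y^n\in I$ for some $n$. Under the stated hypotheses the two maps are mutually inverse bijections preserving primes. *)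

From HB Require Import structures.
From mathcomp Require Import all_boot all_order all_algebra.
Set Implicit Arguments. Unset Strict Implicit. Unset Printing Implicit Defensive.
Import GRing.Theory.
Local Open Scope ring_scope.

Definition sle (S : comNzSemiRingType) (a b : S) : Prop := a + b = b.

Definition idempotent_semifield (S : comNzSemiRingType) : Prop :=
  (forall a : S, a + a = a) /\
  (forall a : S, a <> 0 -> exists b : S, a * b = 1).

Record seminorm (R : comNzRingType) (S : comNzSemiRingType) (v : R -> S) : Prop := {
  sn0 : v 0 = 0;
  sn1 : v 1 = 1;
  snN1 : v (-1) = 1;
  snM : forall a b, sle (v (a * b)) (v a * v b);
  snD : forall a b, sle (v (a + b)) (v a + v b) }.

Record valuation (R : comNzRingType) (S : comNzSemiRingType) (v : R -> S) : Prop := {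
  val_seminorm : seminorm v;
  val_mul : forall a b, v (a * b) = v a * v b;
  val_nz : forall a, a <> 0 -> v a <> 0 }.

Definition Rcirc (R : comNzRingType) (S : comNzSemiRingType) (v : R -> S) (a : R) : Prop :=
  sle (v a) 1.
Definition Scirc (S : comNzSemiRingType) (x : S) : Prop := sle x 1.

Definition bezout (R : comNzRingType) (S : comNzSemiRingType) (v : R -> S) : Prop :=
  forall a b : R, exists x y : R,
    Rcirc v x /\ Rcirc v y /\ v (x * a + y * b) = v a + v b.

Definition vcirc_surjective (R : comNzRingType) (S : comNzSemiRingType) (v : R -> S) : Prop :=
  forall s : S, Scirc s -> exists a : R, Rcirc v a /\ v a = s.

Definition Rcirc_ideal (R : comNzRingType) (S : comNzSemiRingType) (v : R -> S)
  (I : R -> Prop) : Prop :=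
  (forall a, I a -> Rcirc v a) /\ I 0 /\
  (forall a b, I a -> I b -> I (a + b)) /\
  (forall r a, Rcirc v r -> I a -> I (r * a)).

Definition Scirc_kideal (S : comNzSemiRingType) (J : S -> Prop) : Prop :=
  (forall x, J x -> Scirc x) /\ J 0 /\
  (forall x y, J x -> J y -> J (x + y)) /\
  (forall r x, Scirc r -> J x -> J (r * x)) /\
  (forall x y, Scirc x -> Scirc y -> J (x + y) -> J x -> J y).

(* Radical / primary, relative to an ambient semiring given by a predicate A. *)
Definition radical_in (T : comNzSemiRingType) (A I : T -> Prop) : Prop :=
  forall x n, A x -> I (x ^+ n.+1) -> I x.

Definition primary_in (T : comNzSemiRingType) (A I : T -> Prop) : Prop :=
  forall x y, A x -> A y -> I (x * y) -> ~ I x -> exists n, I (y ^+ n.+1).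

Definition vimage (R : comNzRingType) (S : comNzSemiRingType) (v : R -> S)
  (I : R -> Prop) : S -> Prop := fun s => exists a, I a /\ v a = s.
Definition vpreimage (R : comNzRingType) (S : comNzSemiRingType) (v : R -> S)
  (J : S -> Prop) : R -> Prop := fun a => J (v a).

From mathcomp Require Import all_boot all_order all_algebra.
Set Implicit Arguments. Unset Strict Implicit. Unset Printing Implicit Defensive.
Import GRing.Theory.
Local Open Scope ring_scope.

(* Both properties only involve products and powers, so they transfer along
   any multiplicative map.  In the ideal-to-k-ideal direction one also needs
   that an ideal I of R° is recovered from its image, i.e. I = v^-1(v(I)):
   if v c <= v a with a in I, then c = (c/a) a with c/a in R°. *)

Section MultiplicativeTransfer.

Variables (T U : comNzSemiRingType) (f : T -> U).
Hypothesis fM : monoid_morphism f.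
Variables (A : T -> Prop) (B : U -> Prop).

Lemma monoid_morphismX x n : f (x ^+ n) = f x ^+ n.
Proof.
elim: n => [|n IHn]; first by rewrite !expr0 fM.1.
by rewrite !exprS fM.2 IHn.
Qed.

Section Pullback.

Hypothesis fAB : forall x, A x -> B (f x).
Variable J : U -> Prop.

Lemma radical_in_pullback :
  radical_in B J -> radical_in A (fun x => J (f x)).
Proof. by move=> radJ x n Ax; rewrite monoid_morphismX; apply: radJ; apply: fAB. Qed.

Lemma primary_in_pullback :
  primary_in B J -> primary_in A (fun x => J (f x)).
Proof.
move=> primJ x y Ax Ay; rewrite fM.2 => Jxy nJx.
have [n Jyn] := primJ _ _ (fAB Ax) (fAB Ay) Jxy nJx.
by exists n; rewrite monoid_morphismX.
Qed.

End Pullback.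

Section Pushforward.

Hypothesis fAB_onto : forall y, B y -> exists2 x, A x & f x = y.
Variables (I : T -> Prop) (J : U -> Prop).
Hypothesis JfI : forall x, J (f x) <-> I x.

Lemma radical_in_pushforward : radical_in A I -> radical_in B J.
Proof.
move=> radI _ n /fAB_onto[x Ax <-].
by rewrite -monoid_morphismX => /JfI Ixn; apply/JfI; apply: radI Ixn.
Qed.

Lemma primary_in_pushforward : primary_in A I -> primary_in B J.
Proof.
move=> primI _ _ /fAB_onto[x Ax <-] /fAB_onto[y Ay <-].
rewrite -fM.2 => /JfI Ixy nJx.
have [|n Iyn] := primI x y Ax Ay Ixy; first by move/JfI.
by exists n; rewrite -monoid_morphismX; apply/JfI.
Qed.

End Pushforward.

End MultiplicativeTransfer.

Section Valuation.

Variables (R : comNzRingType) (S : comNzSemiRingType) (v : R -> S).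
Hypothesis hv : valuation v.

Lemma valuation_monoid_morphism : monoid_morphism v.
Proof. by split; [exact: sn1 (val_seminorm hv) | exact: val_mul hv]. Qed.

Lemma valuation_eq0 a : v a = 0 -> a = 0.
Proof. by have [//|/eqP a_neq0] := eqVneq a 0; move/(val_nz hv a_neq0). Qed.

End Valuation.

Section ValuationIdeals.

Variables (R : fieldType) (S : comNzSemiRingType) (v : R -> S).
Hypothesis hv : valuation v.

Lemma Rcirc_ideal_vle I a c :
  Rcirc_ideal v I -> I a -> sle (v c) (v a) -> I c.
Proof.
move=> [_ [I0 [_ IM]]] Ia le_ca.
have [a0|a_neq0] := eqVneq a 0.
  move: le_ca; rewrite a0 /sle (sn0 (val_seminorm hv)) addr0.
  by move=> /(valuation_eq0 hv)->.
have -> : c = c / a * a by rewrite divfK.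
apply: IM => //; rewrite /Rcirc /sle (val_mul hv).
have vaV : v a * v a^-1 = 1 by rewrite -(val_mul hv) mulfV // (sn1 (val_seminorm hv)).
by rewrite -vaV -mulrDl le_ca.
Qed.

Lemma vpreimage_vimage_ideal I :
  (forall s : S, s + s = s) -> Rcirc_ideal v I ->
  forall c, vpreimage v (vimage v I) c <-> I c.
Proof.
move=> idem hI c; split; last by exists c.
by case=> a [Ia vac]; apply: Rcirc_ideal_vle hI Ia _; rewrite /sle vac idem.
Qed.

End ValuationIdeals.

Theorem proposition2p14 (R : fieldType) (S : comNzSemiRingType) (v : R -> S) :
  idempotent_semifield S ->
  valuation v ->
  bezout v ->
  vcirc_surjective v ->
  (forall I : R -> Prop, Rcirc_ideal v I ->
     (radical_in (Rcirc v) I -> radical_in (@Scirc S) (vimage v I)) /\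
     (primary_in (Rcirc v) I -> primary_in (@Scirc S) (vimage v I))) /\
  (forall J : S -> Prop, Scirc_kideal J ->
     (radical_in (@Scirc S) J -> radical_in (Rcirc v) (vpreimage v J)) /\
     (primary_in (@Scirc S) J -> primary_in (Rcirc v) (vpreimage v J))).
Proof.
(* Only idempotence of S is used: the Bezout property, inverses in S and the
   k-ideal axioms are needed for the correspondence to be bijective, not here. *)
move=> [idem _] hv _ v_onto.
have vM := valuation_monoid_morphism hv.
have onto : forall s, Scirc s -> exists2 a, Rcirc v a & v a = s.
  by move=> s /v_onto[a [Ra <-]]; exists a.
split=> [I hI | J _].
  have vIK := vpreimage_vimage_ideal hv idem hI.
  exact: conj (radical_in_pushforward vM onto vIK) (primary_in_pushforward vM onto vIK).
have vRS : forall a, Rcirc v a -> Scirc (v a) by [].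
exact: conj (radical_in_pullback vM vRS (J := J)) (primary_in_pullback vM vRS (J := J)).
Qed.
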